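(* For $n=1$, the Kähler-Ricci soliton metric $g$ described in the context satisfies, for every tangent 2-plane $\alpha$ at every point, $$-\tfrac23<\mathrm{Sec}(\alpha)<0,$$ and both bounds are sharp (the infimum of sectional curvatures over $M$ is $-2/3$ and the supremum is $0$).
   Context: $\mathcal H_3$ is the 3-dimensional Heisenberg group with coordinates $(x,y,z)$ and left-invariant coframe $\sigma=dx$, $\rho=dy$, $\zeta=x\,dy-dz$. $F_1(\phi)=\frac{4}{\phi}\big[1-\phi+\frac{\phi^2}{2}-e^{-\phi}\big]$ for $\phi>0$. On $M=\mathcal H_3\times(0,\infty)$, with $\phi$ the coordinate on $(0,\infty)$, $g=\phi(\sigma^2+\rho^2)+F_1(\phi)\zeta^2+\frac{1}{F_1(\phi)}d\phi^2$; this is a complete Kähler metric (Kähler form $d(\phi\zeta)$) which together with $f=-\phi$ is an expanding gradient Kähler-Ricci soliton, $\mathrm{Ric}+\nabla df=-g$. *)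

From Stdlib Require Import Reals.
From Coquelicot Require Import Coquelicot.
From mathcomp Require Import all_boot all_order all_algebra.
From mathcomp Require Import Rstruct.

Set Implicit Arguments.
Unset Strict Implicit.
Unset Printing Implicit Defensive.
Import GRing.Theory.

(* Coordinates on M = H_3 x (0,oo): index 0 = x, 1 = y, 2 = z, 3 = phi. *)
Definition point := 'I_4 -> R.
Definition tvec := 'I_4 -> R.

Definition i0 : 'I_4 := @Ordinal 4 0 isT.
Definition i1 : 'I_4 := @Ordinal 4 1 isT.
Definition i2 : 'I_4 := @Ordinal 4 2 isT.
Definition i3 : 'I_4 := @Ordinal 4 3 isT.

Definition inM (p : point) : Prop := Rlt 0 (p i3).

Definition F1 (phi : R) : R :=
  (4 / phi * (1 - phi + phi ^+ 2 / 2 - exp (- phi)))%R.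

(* Coordinate components of
   g = phi (dx^2 + dy^2) + F1(phi) (x dy - dz)^2 + (1/F1(phi)) dphi^2. *)
Definition gcoef (p : point) (i j : 'I_4) : R :=
  let x := p i0 in let phi := p i3 in
  match nat_of_ord i, nat_of_ord j with
  | 0, 0 => phi
  | 1, 1 => (phi + F1 phi * x ^+ 2)%R
  | 1, 2 => (- (F1 phi * x))%R
  | 2, 1 => (- (F1 phi * x))%R
  | 2, 2 => F1 phi
  | 3, 3 => ((F1 phi)^-1)%R
  | _, _ => 0%R
  end.

Definition pd (i : 'I_4) (f : point -> R) (p : point) : R :=
  Derive (fun t => f (fun j => if j == i then t else p j)) (p i).

Definition gmx (p : point) : 'M[R]_4 := \matrix_(i, j) gcoef p i j.

Definition ginv (p : point) (i j : 'I_4) : R := invmx (gmx p) i j.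

Local Open Scope ring_scope.

Definition Gamma (a b c : 'I_4) (p : point) : R :=
  2^-1 * \sum_(d < 4) ginv p a d *
    (pd b (fun q => gcoef q d c) p + pd c (fun q => gcoef q d b) p
     - pd d (fun q => gcoef q b c) p).

(* Riemann tensor, R(d_c, d_d) d_b = Riem a b c d * d_a, with
   R(X,Y)Z = nabla_X nabla_Y Z - nabla_Y nabla_X Z - nabla_[X,Y] Z:
   R^a_{bcd} = d_c Gamma^a_{db} - d_d Gamma^a_{cb}
               + Gamma^a_{ce} Gamma^e_{db} - Gamma^a_{de} Gamma^e_{cb} *)
Definition Riem (a b c d : 'I_4) (p : point) : R :=
  pd c (Gamma a d b) p - pd d (Gamma a c b) p
  + \sum_(e < 4) (Gamma a c e p * Gamma e d b p - Gamma a d e p * Gamma e c b p).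

Definition gdot (p : point) (u v : tvec) : R :=
  \sum_(i < 4) \sum_(j < 4) gcoef p i j * u i * v j.

Definition Rm4 (p : point) (u v : tvec) : R :=
  \sum_(a < 4) \sum_(b < 4) \sum_(c < 4) \sum_(d < 4) \sum_(e < 4)
    Riem a b c d p * u c * v d * v b * gcoef p a e * u e.

Definition sec (p : point) (u v : tvec) : R :=
  Rm4 p u v / (gdot p u u * gdot p v v - gdot p u v ^+ 2).

Definition lin_indep (u v : tvec) : Prop :=
  forall a b : R, (forall i, a * u i + b * v i = 0) -> a = 0 /\ b = 0.

From Stdlib Require Import Reals Lra Psatz Classical.
From Coquelicot Require Import Coquelicot.
From mathcomp Require Import all_boot all_algebra.
From mathcomp Require Import Rstruct.
Local Open Scope R_scope.

(* The metric only depends on x and phi, so everything is computed in closed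
   form.  Writing F = F1(phi), the curvature of a plane with components
   Xhor = phi sigma^rho, Yver = zeta^dphi and mixed part Smix (the weighted
   squares of sigma^zeta, rho^zeta, sigma^dphi, rho^dphi) is
     Sec = (Khor Xhor^2 + Kver Yver^2 + 6 m Xhor Yver - m Smix)
           / (Xhor^2 + Yver^2 + Smix),
   with Khor = -F/phi^2, Kver = -F''/2, m = (phi F' - F)/(4 phi^2). *)

(* A differentiable function vanishing at 0 whose derivative is positive on
   (0, oo) is itself positive on (0, oo).  Every inequality on exp below is
   obtained by iterating this remark. *)
Lemma pos_of_deriv_pos (f f' : R -> R) :
  (forall t, is_derive f t (f' t)) -> f 0 = 0 ->
  (forall t, 0 < t -> 0 < f' t) -> forall t, 0 < t -> 0 < f t.
Proof.
  move=> Hd H0 Hpos t Ht.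
  have [c [Hmvt Hc]] : exists c, f t - f 0 = f' c * (t - 0) /\ 0 < c < t.
  { apply: MVT_cor2 => // c _. exact/is_derive_Reals. }
  have : 0 < f' c * (t - 0) by apply: Rmult_lt_0_compat; [apply: Hpos|]; lra.
  lra.
Qed.

Section ExpNeg.

Lemma exp_neg_lt_1 t : 0 < t -> exp (- t) < 1.
Proof. move=> Ht; rewrite -exp_0; apply: exp_increasing; lra. Qed.

Lemma exp_neg_taylor1 t : 0 < t -> 1 - t < exp (- t).
Proof. move=> Ht; have /exp_ineq1 : - t <> 0 by lra. lra. Qed.

Lemma exp_neg_taylor2 t : 0 < t -> exp (- t) < 1 - t + t*t/2.
Proof.
  move=> Ht.
  suff : 0 < 1 - t + t*t/2 - exp (- t) by lra.
  apply: (pos_of_deriv_pos (fun s => 1 - s + s*s/2 - exp (- s))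
            (fun s => - 1 + s + exp (- s))) => //.
  - move=> s; auto_derive => //; field.
  - by rewrite Ropp_0 exp_0; field.
  - move=> s Hs; have := exp_neg_taylor1 _ Hs; lra.
Qed.

Lemma exp_neg_taylor3 t : 0 < t -> 1 - t + t*t/2 - t*t*t/6 < exp (- t).
Proof.
  move=> Ht.
  suff : 0 < exp (- t) - (1 - t + t*t/2 - t*t*t/6) by lra.
  apply: (pos_of_deriv_pos (fun s => exp (- s) - (1 - s + s*s/2 - s*s*s/6))
            (fun s => 1 - s + s*s/2 - exp (- s))) => //.
  - move=> s; auto_derive => //; field.
  - by rewrite Ropp_0 exp_0; field.
  - move=> s Hs; have := exp_neg_taylor2 _ Hs; lra.
Qed.

Lemma exp_neg_taylor4 t : 0 < t ->
  exp (- t) < 1 - t + t*t/2 - t*t*t/6 + t*t*t*t/24.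
Proof.
  move=> Ht.
  suff : 0 < 1 - t + t*t/2 - t*t*t/6 + t*t*t*t/24 - exp (- t) by lra.
  apply: (pos_of_deriv_pos (fun s => 1 - s + s*s/2 - s*s*s/6 + s*s*s*s/24 - exp (- s))
            (fun s => exp (- s) - (1 - s + s*s/2 - s*s*s/6))) => //.
  - move=> s; auto_derive => //; field.
  - by rewrite Ropp_0 exp_0; field.
  - move=> s Hs; have := exp_neg_taylor3 _ Hs; lra.
Qed.

Lemma exp_neg_mul_succ t : 0 < t -> exp (- t) * (1 + t) < 1.
Proof.
  move=> Ht.
  suff : 0 < 1 - exp (- t) * (1 + t) by lra.
  apply: (pos_of_deriv_pos (fun s => 1 - exp (- s) * (1 + s))
            (fun s => s * exp (- s))) => //.
  - move=> s; auto_derive => //; field.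
  - by rewrite Ropp_0 exp_0; field.
  - move=> s Hs; apply: Rmult_lt_0_compat => //; exact: exp_pos.
Qed.

Lemma exp_neg_quadratic t : 0 < t -> exp (- t) * (t*t + 2*t + 2) < 2.
Proof.
  move=> Ht.
  suff : 0 < 2 - exp (- t) * (t*t + 2*t + 2) by lra.
  apply: (pos_of_deriv_pos (fun s => 2 - exp (- s) * (s*s + 2*s + 2))
            (fun s => exp (- s) * (s * s))) => //.
  - move=> s; auto_derive => //; field.
  - by rewrite Ropp_0 exp_0; field.
  - move=> s Hs; apply: Rmult_lt_0_compat; [exact: exp_pos | nra].
Qed.

Lemma exp_neg_quadratic_lower t : 0 < t -> 2 - exp (- t) * (t*t + 2*t + 2) < t*t*t/3.
Proof.
  move=> Ht.
  suff : 0 < t*t*t/3 - 2 + exp (- t) * (t*t + 2*t + 2) by lra.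
  apply: (pos_of_deriv_pos (fun s => s*s*s/3 - 2 + exp (- s) * (s*s + 2*s + 2))
            (fun s => s * s * (1 - exp (- s)))) => //.
  - move=> s; auto_derive => //; field.
  - by rewrite Ropp_0 exp_0; field.
  - move=> s Hs; have He := exp_neg_lt_1 _ Hs.
    apply: Rmult_lt_0_compat; [nra | lra].
Qed.

Lemma exp_neg_linear t : 0 < t -> 0 < (t - 2) + exp (- t) * (t + 2).
Proof.
  move=> Ht.
  apply: (pos_of_deriv_pos (fun s => (s - 2) + exp (- s) * (s + 2))
            (fun s => 1 - exp (- s) * (1 + s))) => //.
  - move=> s; auto_derive => //; field.
  - by rewrite Ropp_0 exp_0; field.
  - move=> s Hs; have := exp_neg_mul_succ _ Hs; lra.
Qed.

Lemma exp_neg_linear_upper t : 0 < t -> (t - 2) + exp (- t) * (t + 2) < t*t*t/6.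
Proof.
  move=> Ht.
  suff : 0 < t*t*t/6 - (t - 2) - exp (- t) * (t + 2) by lra.
  apply: (pos_of_deriv_pos (fun s => s*s*s/6 - (s - 2) - exp (- s) * (s + 2))
            (fun s => s*s/2 - 1 + exp (- s) * (1 + s))) => //.
  - move=> s; auto_derive => //; field.
  - by rewrite Ropp_0 exp_0; field.
  - apply: (pos_of_deriv_pos (fun s => s*s/2 - 1 + exp (- s) * (1 + s))
              (fun s => s * (1 - exp (- s)))).
    + move=> s; auto_derive => //; field.
    + by rewrite Ropp_0 exp_0; field.
    + move=> s Hs; have He := exp_neg_lt_1 _ Hs.
      apply: Rmult_lt_0_compat; lra.
Qed.

(* cosh t > 1 + t^2/2, written with exp(-t) *)
Lemma exp_neg_cosh t : 0 < t -> exp (- t) * (t*t + 2) < 1 + exp (- t) * exp (- t).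
Proof.
  move=> Ht.
  suff : 0 < 1 + exp (- t) * exp (- t) - exp (- t) * (t*t + 2) by lra.
  apply: (pos_of_deriv_pos
            (fun s => 1 + exp (- s) * exp (- s) - exp (- s) * (s*s + 2))
            (fun s => 2 * exp (- s) * (1 - s + s*s/2 - exp (- s)))) => //.
  - move=> s; auto_derive => //; field.
  - by rewrite Ropp_0 exp_0; field.
  - move=> s Hs; have He := exp_pos (- s); have Htaylor := exp_neg_taylor2 _ Hs.
    apply: Rmult_lt_0_compat; lra.
Qed.

End ExpNeg.

Section Warping.

Definition warp (t : R) : R := 4 * (1 - t + t*t/2 - exp (- t)) / t.

Definition dwarp (t : R) : R :=
  4 * (- 1 + t + exp (- t)) / t - 4 * (1 - t + t*t/2 - exp (- t)) / (t*t).

Definition d2warp (t : R) : R :=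
  4 * (1 - exp (- t)) / t - 8 * (- 1 + t + exp (- t)) / (t*t)
  + 8 * (1 - t + t*t/2 - exp (- t)) / (t*t*t).

Lemma is_derive_warp t : t <> 0 -> is_derive warp t (dwarp t).
Proof. move=> Ht; rewrite /warp /dwarp; auto_derive; auto; by field. Qed.

Lemma is_derive_dwarp t : t <> 0 -> is_derive dwarp t (d2warp t).
Proof. move=> Ht; rewrite /dwarp /d2warp; auto_derive; auto; by field. Qed.

Lemma warp_pos t : 0 < t -> 0 < warp t.
Proof.
  move=> Ht; rewrite /warp; apply: Rdiv_lt_0_compat => //.
  have := exp_neg_taylor2 _ Ht; lra.
Qed.

(* The three curvature coefficients of the metric at phi = t: the sectional
   curvatures of the horizontal plane sigma^rho and of the vertical plane
   zeta^dphi, and the coefficient coupling the two. *)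
Definition Khor (t : R) : R := - warp t / (t*t).
Definition Kver (t : R) : R := - d2warp t / 2.
Definition Kmix (t : R) : R := (t * dwarp t - warp t) / (4 * t * t).

Lemma Khor_closed t : 0 < t -> Khor t = - (4 * (1 - t + t*t/2 - exp (- t))) / (t*t*t).
Proof. move=> Ht; rewrite /Khor /warp; field; lra. Qed.

Lemma Kver_closed t : 0 < t -> Kver t = - (4 - 2 * exp (- t) * (t*t + 2*t + 2)) / (t*t*t).
Proof. move=> Ht; rewrite /Kver /d2warp; field; lra. Qed.

Lemma Kmix_closed t : 0 < t -> Kmix t = ((t - 2) + exp (- t) * (t + 2)) / (t*t*t).
Proof. move=> Ht; rewrite /Kmix /dwarp /warp; field; lra. Qed.

Lemma cube_pos t : 0 < t -> 0 < t*t*t.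
Proof. by move=> Ht; apply: Rmult_lt_0_compat => //; apply: Rmult_lt_0_compat. Qed.

Lemma lt_div_of_mul_lt lo a c : 0 < c -> lo * c < a -> lo < a / c.
Proof. move=> Hc H; apply: (Rmult_lt_reg_r c) => //; rewrite /Rdiv Rmult_assoc Rinv_l; lra. Qed.

Lemma div_lt_of_lt_mul hi a c : 0 < c -> a < hi * c -> a / c < hi.
Proof. move=> Hc H; apply: (Rmult_lt_reg_r c) => //; rewrite /Rdiv Rmult_assoc Rinv_l; lra. Qed.

Lemma div_in_interval lo hi a c : 0 < c -> lo * c < a < hi * c -> lo < a / c < hi.
Proof. by move=> Hc [Hlo Hhi]; split; [apply: lt_div_of_mul_lt | apply: div_lt_of_lt_mul]. Qed.

Lemma Khor_bounds t : 0 < t -> - (2/3) < Khor t < 0.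
Proof.
  move=> Ht; rewrite Khor_closed //.
  apply: div_in_interval; first exact: cube_pos.
  have := exp_neg_taylor2 _ Ht; have := exp_neg_taylor3 _ Ht; lra.
Qed.

Lemma Kver_bounds t : 0 < t -> - (2/3) < Kver t < 0.
Proof.
  move=> Ht; rewrite Kver_closed //.
  apply: div_in_interval; first exact: cube_pos.
  have := exp_neg_quadratic _ Ht; have := exp_neg_quadratic_lower _ Ht; lra.
Qed.

Lemma Kmix_bounds t : 0 < t -> 0 < Kmix t < 1/6.
Proof.
  move=> Ht; rewrite Kmix_closed //.
  apply: div_in_interval; first exact: cube_pos.
  have := exp_neg_linear _ Ht; have := exp_neg_linear_upper _ Ht; lra.
Qed.

(* the quadratic form Khor X^2 + 4 Kmix X Y + Kver Y^2 is negative definite *)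
Lemma Kmix_sq_lt t : 0 < t -> 4 * Kmix t * Kmix t < Khor t * Kver t.
Proof.
  move=> Ht; have Hcosh := exp_neg_cosh _ Ht.
  have Hdiff : Khor t * Kver t - 4 * Kmix t * Kmix t
               = 4 * (1 - exp (- t) * (t*t + 2) + exp (- t) * exp (- t)) / (t*t*t*t).
  { rewrite Khor_closed // Kver_closed // Kmix_closed //; field; lra. }
  suff : 0 < Khor t * Kver t - 4 * Kmix t * Kmix t by lra.
  rewrite Hdiff; apply: Rdiv_lt_0_compat; first by lra.
  have := cube_pos _ Ht; nra.
Qed.

(* Sharpness: Khor tends to -2/3 as t -> 0 and Kver tends to 0 as t -> oo. *)
Lemma Khor_near_zero t : 0 < t -> Khor t < - (2/3) + t / 6.
Proof.
  move=> Ht; rewrite Khor_closed //.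
  apply: div_lt_of_lt_mul; first exact: cube_pos.
  have := exp_neg_taylor4 _ Ht; lra.
Qed.

Lemma Kver_large t : 1 <= t -> - (4 / t) < Kver t.
Proof.
  move=> Ht; rewrite Kver_closed; last by lra.
  suff : 0 < (4 * (t*t - 1) + 2 * exp (- t) * (t*t + 2*t + 2)) / (t*t*t).
  { have -> : (4 * (t*t - 1) + 2 * exp (- t) * (t*t + 2*t + 2)) / (t*t*t)
              = - (4 - 2 * exp (- t) * (t*t + 2*t + 2)) / (t*t*t) + 4 / t
      by field; lra.
    lra. }
  apply: Rdiv_lt_0_compat; last by apply: cube_pos; lra.
  have := exp_pos (- t); nra.
Qed.

End Warping.

Section QuadraticBound.

Lemma sq_nonneg r : 0 <= r * r.
Proof. by have := Rle_0_sqr r. Qed.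

Lemma sq_eq0 r : r * r = 0 -> r = 0.
Proof. by case/Rmult_integral. Qed.

Lemma sum_sq_eq0 a b : a * a + b * b = 0 -> a = 0 /\ b = 0.
Proof.
  move=> H; have := sq_nonneg a; have := sq_nonneg b => Ha Hb.
  by split; apply: sq_eq0; lra.
Qed.

Lemma neg_def_form a b c x y : a < 0 -> b * b < a * c -> x * x + y * y > 0 ->
  a * x * x + 2 * b * x * y + c * y * y < 0.
Proof.
  move=> Ha Hdisc Hxy.
  have Hexpand : a * (a * x * x + 2 * b * x * y + c * y * y)
                 = (a * x + b * y) * (a * x + b * y) + (a * c - b * b) * (y * y) by ring.
  have : 0 < a * (a * x * x + 2 * b * x * y + c * y * y).
  { rewrite Hexpand.
    have [Hy | Hy] := Req_dec y 0.
    - have Hx : x <> 0 by move=> Hx; rewrite Hx Hy in Hxy; lra.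
      have : 0 < (a * x) * (a * x).
      { have Hax : a * x <> 0 by apply: Rmult_integral_contrapositive; split; lra.
        have := Rsqr_pos_lt _ Hax; rewrite /Rsqr; lra. }
      rewrite Hy; lra.
    - have : 0 < y * y by have := Rsqr_pos_lt _ Hy; rewrite /Rsqr.
      have := sq_nonneg (a * x + b * y); nra. }
  nra.
Qed.

Lemma quotient_bounds (Kh Kv m X Y S : R) :
  - (2/3) < Kh < 0 -> - (2/3) < Kv < 0 -> 0 < m < 1/6 -> 4 * m * m < Kh * Kv ->
  - S <= 2 * X * Y <= S -> 0 < X * X + Y * Y + S ->
  - (2/3) < (Kh * X * X + Kv * Y * Y + 6 * m * X * Y - m * S) / (X * X + Y * Y + S) < 0.
Proof.
  move=> [Kh_lo Kh_hi] [Kv_lo Kv_hi] [m_lo m_hi] Hdisc [S_lo S_hi] HD.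
  have HX := sq_nonneg X; have HY := sq_nonneg Y.
  apply: div_in_interval => //; split.
  - (* 6 m X Y >= - 3 m S, and all remaining coefficients are positive *)
    have H6 : - (3 * m * S) <= 6 * m * X * Y by nra.
    suff : 0 < (Kh + 2/3) * (X * X) + (Kv + 2/3) * (Y * Y) + (2/3 - 4 * m) * S by nra.
    have [Hxy | Hxy] := Req_dec (X * X + Y * Y) 0.
    + have HS : 0 < (2/3 - 4 * m) * S by apply: Rmult_lt_0_compat; lra.
      have -> : X * X = 0 by lra.
      have -> : Y * Y = 0 by lra.
      lra.
    + have : 0 < (Kh + 2/3) * (X * X) + (Kv + 2/3) * (Y * Y).
      { have [HX0 | HX0] := Req_dec (X * X) 0.
        - have HY0 : 0 < Y * Y by lra.
          rewrite HX0; nra.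
        - have HX0' : 0 < X * X by lra.
          nra. }
      have : 0 <= (2/3 - 4 * m) * S by apply: Rmult_le_pos; lra.
      lra.
  - have [Hxy | Hxy] := Req_dec (X * X + Y * Y) 0.
    + have HX0 : X = 0 by apply: sq_eq0; lra.
      have HY0 : Y = 0 by apply: sq_eq0; lra.
      have : 0 < m * S by apply: Rmult_lt_0_compat; lra.
      rewrite HX0 HY0; lra.
    + (* 6 m X Y - m S <= 4 m |X Y|, a value of the negative definite form *)
      have Habs : 2 * Rabs (X * Y) <= S by rewrite /Rabs; case: Rcase_abs; lra.
      have H1 : m * (X * Y) <= m * Rabs (X * Y) by apply: Rmult_le_compat_l; [lra | apply: Rle_abs].
      have H2 : m * (2 * Rabs (X * Y)) <= m * S by apply: Rmult_le_compat_l; lra.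
      have HXa : Rabs X * Rabs X = X * X by rewrite -Rabs_mult Rabs_pos_eq.
      have HYa : Rabs Y * Rabs Y = Y * Y by rewrite -Rabs_mult Rabs_pos_eq.
      have Hform : Kh * Rabs X * Rabs X + 2 * (2 * m) * Rabs X * Rabs Y + Kv * Rabs Y * Rabs Y < 0.
      { apply: neg_def_form => //; first by lra.
        rewrite HXa HYa; lra. }
      rewrite !(Rmult_assoc Kh) !(Rmult_assoc Kv) HXa HYa Rmult_assoc -Rabs_mult in Hform.
      lra.
Qed.

End QuadraticBound.

Lemma natmul_IZR n : (GRing.natmul (GRing.one _) n : R) = IZR (Z.of_nat n).
Proof. by rewrite -INRE INR_IZR_INZ. Qed.

Ltac to_Rops :=
  rewrite -?RplusE -?RmultE -?RoppE -?RinvE ?natmul_IZR -?RpowE -?R0E -?R1E.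

Lemma F1_warp t : F1 t = warp t.
Proof. rewrite /F1 /warp; to_Rops; rewrite /= /Rdiv; ring. Qed.

Lemma ord4_cases (i : 'I_4) : i = i0 \/ i = i1 \/ i = i2 \/ i = i3.
Proof.
  case: i => [[|[|[|[|n]]]] Hn]; last by [].
  - by left; apply: val_inj.
  - by right; left; apply: val_inj.
  - by right; right; left; apply: val_inj.
  - by right; right; right; apply: val_inj.
Qed.

Ltac case_ord i := case: (ord4_cases i) => [->|[->|[->|->]]].

Lemma sum4 (f : 'I_4 -> R) : (\sum_(i < 4) f i)%R = f i0 + f i1 + f i2 + f i3.
Proof.
  rewrite !big_ord_recr big_ord0 /=; to_Rops.
  have -> : widen_ord (leqnSn 3) (widen_ord (leqnSn 2) (widen_ord (leqnSn 1) ord_max)) = i0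
    by apply: val_inj.
  have -> : widen_ord (leqnSn 3) (widen_ord (leqnSn 2) ord_max) = i1 by apply: val_inj.
  have -> : widen_ord (leqnSn 3) ord_max = i2 by apply: val_inj.
  have -> : (ord_max : 'I_4) = i3 by apply: val_inj.
  ring.
Qed.

Lemma ex_derive_warp t : t <> 0 -> ex_derive warp t.
Proof. by move=> Ht; exists (dwarp t); apply: is_derive_warp. Qed.

Lemma ex_derive_dwarp t : t <> 0 -> ex_derive dwarp t.
Proof. by move=> Ht; exists (d2warp t); apply: is_derive_dwarp. Qed.

Lemma Derive_warp t : t <> 0 -> Derive (fun s => warp s) t = dwarp t.
Proof. by move=> Ht; apply: is_derive_unique; apply: is_derive_warp. Qed.

Lemma Derive_dwarp t : t <> 0 -> Derive (fun s => dwarp s) t = d2warp t.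
Proof. by move=> Ht; apply: is_derive_unique; apply: is_derive_dwarp. Qed.

Ltac compute_derive Hne :=
  first
    [ apply: Derive_const
    | erewrite is_derive_unique; [reflexivity|]; auto_derive;
      [ repeat split; auto using ex_derive_warp, ex_derive_dwarp;
        repeat match goal with
               | |- _ * _ <> 0 => apply: Rmult_integral_contrapositive_currified
               end; lra
      | rewrite ?(Derive_warp _ Hne) ?(Derive_dwarp _ Hne); field; lra ] ].

Section Coordinates.

Definition metric_entry (d c : nat) (x ph : R) : R :=
  let F := warp ph in
  match d, c with
  | 0, 0 => ph
  | 1, 1 => ph + x * x * F
  | 1, 2 | 2, 1 => - (x * F)
  | 2, 2 => F
  | 3, 3 => 1 / F
  | _, _ => 0
  end.

Definition metric_deriv (i d c : nat) (x ph : R) : R :=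
  let F := warp ph in let dF := dwarp ph in
  match i, d, c with
  | 0, 1, 1 => 2 * x * F
  | 0, 1, 2 | 0, 2, 1 => - F
  | 3, 0, 0 => 1
  | 3, 1, 1 => 1 + x * x * dF
  | 3, 1, 2 | 3, 2, 1 => - (x * dF)
  | 3, 2, 2 => dF
  | 3, 3, 3 => - dF / (F * F)
  | _, _, _ => 0
  end.

Definition inverse_metric_entry (a d : nat) (x ph : R) : R :=
  let F := warp ph in
  match a, d with
  | 0, 0 | 1, 1 => 1 / ph
  | 1, 2 | 2, 1 => x / ph
  | 2, 2 => 1 / F + x * x / ph
  | 3, 3 => F
  | _, _ => 0
  end.

Definition christoffel_entry (a b c : nat) (x ph : R) : R :=
  let F := warp ph in let dF := dwarp ph in
  match a, b, c with
  | 0, 0, 3 | 0, 3, 0 | 1, 1, 3 | 1, 3, 1 => 1 / (2 * ph)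
  | 0, 1, 1 => - x * F / ph
  | 0, 1, 2 | 0, 2, 1 => F / (2 * ph)
  | 1, 0, 1 | 1, 1, 0 => x * F / (2 * ph)
  | 1, 0, 2 | 1, 2, 0 => - F / (2 * ph)
  | 2, 0, 1 | 2, 1, 0 => - 1 / 2 + x * x * F / (2 * ph)
  | 2, 0, 2 | 2, 2, 0 => - x * F / (2 * ph)
  | 2, 1, 3 | 2, 3, 1 => x / (2 * ph) - x * dF / (2 * F)
  | 2, 2, 3 | 2, 3, 2 => dF / (2 * F)
  | 3, 0, 0 => - F / 2
  | 3, 1, 1 => - F / 2 - x * x * F * dF / 2
  | 3, 1, 2 | 3, 2, 1 => x * F * dF / 2
  | 3, 2, 2 => - F * dF / 2
  | 3, 3, 3 => - dF / (2 * F)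
  | _, _, _ => 0
  end.

Lemma gcoef_entry q d c : gcoef q d c = metric_entry d c (q i0) (q i3).
Proof.
  rewrite /gcoef.
  case_ord d; case_ord c; rewrite /=; to_Rops; rewrite ?F1_warp //= /Rdiv; ring.
Qed.

Variable p : point.
Hypothesis p_in : inM p.

Let ph_ne0 : p i3 <> 0.  Proof. by move: p_in; rewrite /inM; lra. Qed.
Let warp_gt0 : 0 < warp (p i3).  Proof. exact: warp_pos. Qed.

Lemma pd_gcoef i d c : pd i (fun q => gcoef q d c) p = metric_deriv i d c (p i0) (p i3).
Proof.
  rewrite /pd.
  transitivity (Derive (fun t => metric_entry d c
     ((fun j => if j == i then t else p j) i0) ((fun j => if j == i then t else p j) i3)) (p i)).
  { apply: Derive_ext => t; exact: gcoef_entry. }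
  case_ord i; rewrite /=; case_ord d; case_ord c; rewrite /=; compute_derive ph_ne0.
Qed.

Lemma ginv_entry a d : ginv p a d = inverse_metric_entry a d (p i0) (p i3).
Proof.
  pose M : 'M[R]_4 := (\matrix_(i, j) inverse_metric_entry i j (p i0) (p i3))%R.
  have HM : (gmx p *m M = 1%:M)%R.
  { apply/matrixP => i j; rewrite !mxE sum4 !mxE !gcoef_entry.
    case_ord i; case_ord j; rewrite /=; to_Rops; rewrite /=; field; lra. }
  have Hunit : gmx p \in unitmx by case: (mulmx1_unit HM).
  have HMinv : invmx (gmx p) = M.
  { by rewrite -[invmx _]mulmx1 -HM mulmxA mulVmx // mul1mx. }
  by rewrite /ginv HMinv mxE.
Qed.

Lemma Gamma_entry a b c : Gamma a b c p = christoffel_entry a b c (p i0) (p i3).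
Proof.
  rewrite /Gamma sum4 !ginv_entry !pd_gcoef.
  case_ord a; case_ord b; case_ord c; rewrite /=; to_Rops; rewrite /=; field; lra.
Qed.

End Coordinates.

Section Curvature.

Definition christoffel_dx (a b c : nat) (x ph : R) : R :=
  let F := warp ph in let dF := dwarp ph in
  match a, b, c with
  | 0, 1, 1 => - F / ph
  | 1, 0, 1 | 1, 1, 0 => F / (2 * ph)
  | 2, 0, 1 | 2, 1, 0 => x * F / ph
  | 2, 0, 2 | 2, 2, 0 => - F / (2 * ph)
  | 2, 1, 3 | 2, 3, 1 => 1 / (2 * ph) - dF / (2 * F)
  | 3, 1, 1 => - x * F * dF
  | 3, 1, 2 | 3, 2, 1 => F * dF / 2
  | _, _, _ => 0
  end.

Definition christoffel_dphi (a b c : nat) (x ph : R) : R :=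
  let F := warp ph in let dF := dwarp ph in let d2F := d2warp ph in
  match a, b, c with
  | 0, 0, 3 | 0, 3, 0 | 1, 1, 3 | 1, 3, 1 => - 1 / (2 * ph * ph)
  | 0, 1, 1 => x * F / (ph * ph) - x * dF / ph
  | 0, 1, 2 | 0, 2, 1 => - F / (2 * ph * ph) + dF / (2 * ph)
  | 1, 0, 1 | 1, 1, 0 => - x * F / (2 * ph * ph) + x * dF / (2 * ph)
  | 1, 0, 2 | 1, 2, 0 => F / (2 * ph * ph) - dF / (2 * ph)
  | 2, 0, 1 | 2, 1, 0 => - x * x * F / (2 * ph * ph) + x * x * dF / (2 * ph)
  | 2, 0, 2 | 2, 2, 0 => x * F / (2 * ph * ph) - x * dF / (2 * ph)
  | 2, 1, 3 | 2, 3, 1 => - x / (2 * ph * ph) + x * dF * dF / (2 * F * F) - x * d2F / (2 * F)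
  | 2, 2, 3 | 2, 3, 2 => - dF * dF / (2 * F * F) + d2F / (2 * F)
  | 3, 0, 0 => - dF / 2
  | 3, 1, 1 => - dF / 2 - x * x * dF * dF / 2 - x * x * F * d2F / 2
  | 3, 1, 2 | 3, 2, 1 => x * dF * dF / 2 + x * F * d2F / 2
  | 3, 2, 2 => - dF * dF / 2 - F * d2F / 2
  | 3, 3, 3 => dF * dF / (2 * F * F) - d2F / (2 * F)
  | _, _, _ => 0
  end.

(* d_i Gamma^a_{bc}: the symbols depend on x and phi only *)
Definition christoffel_deriv (i a b c : nat) (x ph : R) : R :=
  match i with
  | 0 => christoffel_dx a b c x ph
  | 3 => christoffel_dphi a b c x ph
  | _ => 0
  end.

(* g(R(d_c, d_d) d_b, d_e): the Riemann tensor with its upper index lowered *)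
Definition riemann_entry (b c d e : nat) (x ph : R) : R :=
  let F := warp ph in let dF := dwarp ph in let d2F := d2warp ph in
  match b, c, d, e with
  | 0, 0, 1, 1 | 1, 1, 0, 0 => F - x * x * F * F / (4 * ph) + x * x * F * dF / 4
  | 0, 0, 1, 2 | 0, 0, 2, 1 | 1, 2, 0, 0 | 2, 1, 0, 0 => x * F * F / (4 * ph) - x * F * dF / 4
  | 0, 0, 2, 2 | 1, 1, 2, 2 | 2, 2, 0, 0 | 2, 2, 1, 1 => - F * F / (4 * ph) + F * dF / 4
  | 0, 0, 3, 3 | 3, 3, 0, 0 => - 1 / (4 * ph) + dF / (4 * F)
  | 0, 1, 0, 1 | 1, 0, 1, 0 => - F + x * x * F * F / (4 * ph) - x * x * F * dF / 4
  | 0, 1, 0, 2 | 0, 2, 0, 1 | 1, 0, 2, 0 | 2, 0, 1, 0 => - x * F * F / (4 * ph) + x * F * dF / 4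
  | 0, 1, 2, 3 | 0, 3, 1, 2 | 1, 0, 3, 2 | 1, 2, 0, 3 | 2, 1, 3, 0 | 2, 3, 0, 1 | 3, 0, 2, 1 | 3, 2, 1, 0
      => F / (4 * ph) - dF / 4
  | 0, 1, 3, 1 | 1, 0, 1, 3 | 1, 3, 1, 0 | 3, 1, 0, 1 => 3 * x * F / (4 * ph) - 3 * x * dF / 4
  | 0, 1, 3, 2 | 0, 2, 1, 3 | 1, 0, 2, 3 | 1, 3, 0, 2 | 2, 0, 3, 1 | 2, 3, 1, 0 | 3, 1, 2, 0 | 3, 2, 0, 1
      => - F / (4 * ph) + dF / 4
  | 0, 2, 0, 2 | 1, 2, 1, 2 | 2, 0, 2, 0 | 2, 1, 2, 1 => F * F / (4 * ph) - F * dF / 4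
  | 0, 2, 3, 1 | 1, 3, 2, 0 | 2, 0, 1, 3 | 3, 1, 0, 2 => - F / (2 * ph) + dF / 2
  | 0, 3, 0, 3 | 3, 0, 3, 0 => 1 / (4 * ph) - dF / (4 * F)
  | 0, 3, 1, 1 | 1, 1, 0, 3 | 1, 1, 3, 0 | 3, 0, 1, 1 => - 3 * x * F / (4 * ph) + 3 * x * dF / 4
  | 0, 3, 2, 1 | 1, 2, 3, 0 | 2, 1, 0, 3 | 3, 0, 1, 2 => F / (2 * ph) - dF / 2
  | 1, 1, 3, 3 | 3, 3, 1, 1 => - 1 / (4 * ph) + dF / (4 * F) + x * x * d2F / 2
  | 1, 2, 3, 3 | 2, 1, 3, 3 | 3, 3, 1, 2 | 3, 3, 2, 1 => - x * d2F / 2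
  | 1, 3, 1, 3 | 3, 1, 3, 1 => 1 / (4 * ph) - dF / (4 * F) - x * x * d2F / 2
  | 1, 3, 2, 3 | 2, 3, 1, 3 | 3, 1, 3, 2 | 3, 2, 3, 1 => x * d2F / 2
  | 2, 2, 3, 3 | 3, 3, 2, 2 => d2F / 2
  | 2, 3, 2, 3 | 3, 2, 3, 2 => - d2F / 2
  | _, _, _, _ => 0
  end.

Variable p : point.
Hypothesis p_in : inM p.

Let ph_ne0 : p i3 <> 0.  Proof. by move: p_in; rewrite /inM; lra. Qed.
Let warp_gt0 : 0 < warp (p i3).  Proof. exact: warp_pos. Qed.

Lemma pd_Gamma i a b c :
  pd i (Gamma a b c) p = christoffel_deriv i a b c (p i0) (p i3).
Proof.
  rewrite /pd; case_ord i.
  - transitivity (Derive (fun t => christoffel_entry a b c t (p i3)) (p i0)).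
    { by apply: Derive_ext => t; rewrite Gamma_entry. }
    case_ord a; case_ord b; case_ord c; rewrite /=; compute_derive ph_ne0.
  - transitivity (Derive (fun _ => christoffel_entry a b c (p i0) (p i3)) (p i1)).
    { by apply: Derive_ext => t; rewrite Gamma_entry. }
    exact: Derive_const.
  - transitivity (Derive (fun _ => christoffel_entry a b c (p i0) (p i3)) (p i2)).
    { by apply: Derive_ext => t; rewrite Gamma_entry. }
    exact: Derive_const.
  - (* Gamma_entry only holds where phi > 0, i.e. near p *)
    transitivity (Derive (fun t => christoffel_entry a b c (p i0) t) (p i3)).
    { apply: Derive_ext_loc; exists (mkposreal _ p_in) => t Ht.
      have [Ht1 Ht2] := Rabs_def2 _ _ (Ht : Rabs (t - p i3) < p i3).
      by rewrite Gamma_entry // /inM /=; lra. }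
    case_ord a; case_ord b; case_ord c; rewrite /=; compute_derive ph_ne0.
Qed.

Lemma Riem_lowered b c d e :
  (\sum_(a < 4) Riem a b c d p * gcoef p a e)%R = riemann_entry b c d e (p i0) (p i3).
Proof.
  rewrite sum4 /Riem !sum4 !pd_Gamma !Gamma_entry // !gcoef_entry.
  case_ord b; case_ord c; case_ord d; case_ord e; rewrite /=; to_Rops; rewrite /=; field; lra.
Qed.

End Curvature.

Section PluckerCoordinates.
(* A tangent plane is described by the 2x2 minors of the coframe components
   (sigma, rho, zeta, dphi) = (dx, dy, x dy - dz, dphi) of a spanning pair. *)

Definition zeta (p : point) (w : tvec) : R := p i0 * w i1 - w i2.

Definition coframe (p : point) (w : tvec) : tvec :=
  fun j => if j == i2 then zeta p w else w j.

Definition minor (a b : tvec) (i j : 'I_4) : R := a i * b j - a j * b i.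

Definition plucker (p : point) (u v : tvec) : 'I_4 -> 'I_4 -> R :=
  minor (coframe p u) (coframe p v).

Lemma plucker_relation (a b : tvec) :
  minor a b i0 i1 * minor a b i2 i3 - minor a b i0 i2 * minor a b i1 i3
  + minor a b i0 i3 * minor a b i1 i2 = 0.
Proof. rewrite /minor; ring. Qed.

Lemma dependent_of_minors (a b : tvec) : (forall i j, minor a b i j = 0) ->
  exists alpha beta, ~ (alpha = 0 /\ beta = 0) /\ forall i, alpha * a i + beta * b i = 0.
Proof.
  move=> Hminor.
  case: (classic (exists k, b k <> 0)) => [[k Hk] | Hb].
  - exists (b k), (- a k); split; first by case.
    move=> i; have := Hminor i k; rewrite /minor; to_Rops; nra.
  - exists 0, 1; split; first by case => _; lra.
    move=> i; have : b i = 0 by apply: NNPP => Hbi; apply: Hb; exists i.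
    to_Rops; lra.
Qed.

(* the coframe is invertible, so it preserves linear independence *)
Lemma lin_indep_coframe p u v : lin_indep u v -> lin_indep (coframe p u) (coframe p v).
Proof.
  move=> Hli alpha beta Hcomb; apply: Hli => i.
  have := Hcomb i0; have := Hcomb i1; have := Hcomb i2; have := Hcomb i3.
  rewrite /coframe /zeta /=; to_Rops => H3 H2 H1 H0.
  case_ord i; to_Rops => //.
  have -> : alpha * u i2 + beta * v i2
            = p i0 * (alpha * u i1 + beta * v i1)
              - (alpha * (p i0 * u i1 - u i2) + beta * (p i0 * v i1 - v i2)) by ring.
  rewrite H1 H2; ring.
Qed.

End PluckerCoordinates.

Section SectionalCurvature.
(* In the orthonormal coframe (sqrt phi sigma, sqrt phi rho, sqrt F zeta,
   dphi / sqrt F), a plane has components Xhor (sigma^rho), Yver (zeta^dphi)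
   and four mixed ones whose weighted squares add up to Smix. *)

Definition Xhor (p : point) (u v : tvec) : R := p i3 * plucker p u v i0 i1.
Definition Yver (p : point) (u v : tvec) : R := plucker p u v i2 i3.

Definition Smix (p : point) (u v : tvec) : R :=
  let ph := p i3 in let F := warp ph in let P := plucker p u v in
  ph * F * (P i0 i2 * P i0 i2 + P i1 i2 * P i1 i2)
  + ph / F * (P i0 i3 * P i0 i3 + P i1 i3 * P i1 i3).

(* |u ^ v|^2 = g(u,u) g(v,v) - g(u,v)^2 *)
Definition gram (p : point) (u v : tvec) : R :=
  Xhor p u v * Xhor p u v + Yver p u v * Yver p u v + Smix p u v.

(* g(R(u,v)v, u) *)
Definition curv_num (p : point) (u v : tvec) : R :=
  let ph := p i3 in let m := Kmix ph in let P := plucker p u v in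
  let X := Xhor p u v in let Y := Yver p u v in
  Khor ph * X * X + Kver ph * Y * Y + 4 * m * X * Y - m * Smix p u v
  + 2 * m * ph * (P i0 i2 * P i1 i3 - P i0 i3 * P i1 i2).

Variables (p : point) (u v : tvec).
Hypothesis p_in : inM p.

Let warp_gt0 : 0 < warp (p i3).  Proof. exact: warp_pos. Qed.

Lemma Rm4_lowered :
  Rm4 p u v = (\sum_(b < 4) \sum_(c < 4) \sum_(d < 4) \sum_(e < 4)
     riemann_entry b c d e (p i0) (p i3) * u c * v d * v b * u e)%R.
Proof.
  rewrite /Rm4 exchange_big /=; apply: eq_bigr => b _.
  rewrite exchange_big /=; apply: eq_bigr => c _.
  rewrite exchange_big /=; apply: eq_bigr => d _.
  rewrite exchange_big /=; apply: eq_bigr => e _.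
  rewrite -(@Riem_lowered p p_in b c d e) !big_distrl /=; apply: eq_bigr => a _.
  to_Rops; ring.
Qed.

Lemma Rm4_eq : Rm4 p u v = curv_num p u v.
Proof.
  rewrite Rm4_lowered !sum4 /curv_num /Smix /Xhor /Yver /Khor /Kver /Kmix.
  rewrite /plucker /minor /coframe /zeta /=; to_Rops.
  field; move: p_in; rewrite /inM; lra.
Qed.

Lemma gram_eq : (gdot p u u * gdot p v v - gdot p u v ^+ 2)%R = gram p u v.
Proof.
  rewrite /gdot !sum4 /gram /Smix /Xhor /Yver !gcoef_entry.
  rewrite /plucker /minor /coframe /zeta /=; to_Rops; rewrite /=.
  field; move: p_in; rewrite /inM; lra.
Qed.

Lemma sec_eq : sec p u v = curv_num p u v / gram p u v.
Proof. by rewrite /sec -gram_eq -Rm4_eq. Qed.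

(* by the Pluecker relation the last term of curv_num is 2 m Xhor Yver *)
Lemma curv_num_simpl : curv_num p u v =
  Khor (p i3) * Xhor p u v * Xhor p u v + Kver (p i3) * Yver p u v * Yver p u v
  + 6 * Kmix (p i3) * Xhor p u v * Yver p u v - Kmix (p i3) * Smix p u v.
Proof.
  have := plucker_relation (coframe p u) (coframe p v).
  rewrite /curv_num /Xhor /Yver -/(plucker p u v); to_Rops => Hrel.
  have -> : plucker p u v i0 i2 * plucker p u v i1 i3 - plucker p u v i0 i3 * plucker p u v i1 i2
            = plucker p u v i0 i1 * plucker p u v i2 i3 by lra.
  ring.
Qed.

(* the mixed part dominates twice the product Xhor Yver: by the Pluecker
   relation, Smix -+ 2 Xhor Yver is a sum of squares times phi / F *)
Lemma Smix_bounds : - Smix p u v <= 2 * Xhor p u v * Yver p u v <= Smix p u v.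
Proof.
  have := plucker_relation (coframe p u) (coframe p v).
  rewrite -/(plucker p u v) /Smix /Xhor /Yver; to_Rops => Hrel.
  set ph := p i3; set F := warp ph; set P := plucker p u v in Hrel *.
  have Hph : 0 < ph by exact: p_in.
  have HF : 0 < F by exact: warp_gt0.
  have Hsq a b : 0 <= ph * (a * a + b * b) / F.
  { apply: Rmult_le_pos; last by apply: Rlt_le; apply: Rinv_0_lt_compat.
    have := sq_nonneg a; have := sq_nonneg b; nra. }
  have Hminus := Hsq (F * P i0 i2 - P i1 i3) (F * P i1 i2 + P i0 i3).
  have Hplus := Hsq (F * P i0 i2 + P i1 i3) (F * P i1 i2 - P i0 i3).
  have E1 : ph * ((F * P i0 i2 - P i1 i3) * (F * P i0 i2 - P i1 i3)
                  + (F * P i1 i2 + P i0 i3) * (F * P i1 i2 + P i0 i3)) / F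
            = ph * F * (P i0 i2 * P i0 i2 + P i1 i2 * P i1 i2)
              + ph / F * (P i0 i3 * P i0 i3 + P i1 i3 * P i1 i3)
              - 2 * ph * (P i0 i2 * P i1 i3 - P i0 i3 * P i1 i2) by field; lra.
  have E2 : ph * ((F * P i0 i2 + P i1 i3) * (F * P i0 i2 + P i1 i3)
                  + (F * P i1 i2 - P i0 i3) * (F * P i1 i2 - P i0 i3)) / F
            = ph * F * (P i0 i2 * P i0 i2 + P i1 i2 * P i1 i2)
              + ph / F * (P i0 i3 * P i0 i3 + P i1 i3 * P i1 i3)
              + 2 * ph * (P i0 i2 * P i1 i3 - P i0 i3 * P i1 i2) by field; lra.
  have Hrel' : ph * P i0 i1 * P i2 i3 = ph * (P i0 i2 * P i1 i3 - P i0 i3 * P i1 i2).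
  { rewrite Rmult_assoc; congr (_ * _); lra. }
  split; nra.
Qed.

End SectionalCurvature.

Lemma gram_pos p u v : inM p -> lin_indep u v -> 0 < gram p u v.
Proof.
  move=> Hp Hli.
  have HF := warp_pos _ Hp.
  have Hw1 : 0 < p i3 * warp (p i3) by apply: Rmult_lt_0_compat.
  have Hw2 : 0 < p i3 / warp (p i3) by apply: Rdiv_lt_0_compat.
  apply: Rnot_le_lt => Hle.
  move: Hle; rewrite /gram /Smix /Xhor /Yver.
  set P := plucker p u v => Hle.
  have HX := sq_nonneg (p i3 * P i0 i1); have HY := sq_nonneg (P i2 i3).
  have H02 := sq_nonneg (P i0 i2); have H12 := sq_nonneg (P i1 i2).
  have H03 := sq_nonneg (P i0 i3); have H13 := sq_nonneg (P i1 i3).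
  have Hm1 : 0 <= p i3 * warp (p i3) * (P i0 i2 * P i0 i2 + P i1 i2 * P i1 i2) by nra.
  have Hm2 : 0 <= p i3 / warp (p i3) * (P i0 i3 * P i0 i3 + P i1 i3 * P i1 i3) by nra.
  have P01 : P i0 i1 = 0.
  { have /sq_eq0 : p i3 * P i0 i1 * (p i3 * P i0 i1) = 0 by lra.
    by case/Rmult_integral => //; move: Hp; rewrite /inM; lra. }
  have P23 : P i2 i3 = 0 by apply: sq_eq0; lra.
  have [P02 P12] : P i0 i2 = 0 /\ P i1 i2 = 0.
  { apply: sum_sq_eq0.
    have : p i3 * warp (p i3) * (P i0 i2 * P i0 i2 + P i1 i2 * P i1 i2) = 0 by lra.
    by case/Rmult_integral => //; lra. }
  have [P03 P13] : P i0 i3 = 0 /\ P i1 i3 = 0.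
  { apply: sum_sq_eq0.
    have : p i3 / warp (p i3) * (P i0 i3 * P i0 i3 + P i1 i3 * P i1 i3) = 0 by lra.
    by case/Rmult_integral => //; lra. }
  have Hminors : forall i j, minor (coframe p u) (coframe p v) i j = 0.
  { move: P01 P02 P03 P12 P13 P23; rewrite /P /plucker /minor => P01 P02 P03 P12 P13 P23 i j.
    by case_ord i; case_ord j; lra. }
  have [alpha [beta [Hnz Hcomb]]] := dependent_of_minors _ _ Hminors.
  exact: Hnz (lin_indep_coframe p u v Hli alpha beta Hcomb).
Qed.

Lemma sec_bounds p u v : inM p -> lin_indep u v -> - (2/3) < sec p u v < 0.
Proof.
  move=> Hp Hli.
  rewrite sec_eq // curv_num_simpl /gram.
  apply: quotient_bounds.
  - exact: Khor_bounds.
  - exact: Kver_bounds.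
  - exact: Kmix_bounds.
  - exact: Kmix_sq_lt.
  - exact: Smix_bounds.
  - exact: gram_pos.
Qed.

Definition axis_point (t : R) : point := fun j => if j == i3 then t else 0.
Definition basis (k : 'I_4) : tvec := fun j => if j == k then 1 else 0.

Lemma lin_indep_basis i j : i != j -> lin_indep (basis i) (basis j).
Proof.
  move=> Hij a b Hcomb.
  have := Hcomb i; have := Hcomb j.
  rewrite /basis !eqxx (negbTE Hij) eq_sym (negbTE Hij); to_Rops; lra.
Qed.

Lemma sec_horizontal t : 0 < t -> sec (axis_point t) (basis i0) (basis i1) = Khor t.
Proof.
  move=> Ht; have HF := warp_pos _ Ht.
  rewrite sec_eq // curv_num_simpl /gram /Smix /Xhor /Yver.
  rewrite /plucker /minor /coframe /zeta /axis_point /basis /=.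
  field; lra.
Qed.

Lemma sec_vertical t : 0 < t -> sec (axis_point t) (basis i2) (basis i3) = Kver t.
Proof.
  move=> Ht; have HF := warp_pos _ Ht.
  rewrite sec_eq // curv_num_simpl /gram /Smix /Xhor /Yver.
  rewrite /plucker /minor /coframe /zeta /axis_point /basis /=.
  field; lra.
Qed.

Theorem mainTheorem10 :
  (forall (p : point) (u v : tvec), inM p -> lin_indep u v ->
      -(2/3) < sec p u v < 0)
  /\ (forall eps : R, 0 < eps ->
      exists (p : point) (u v : tvec),
        inM p /\ lin_indep u v /\ sec p u v < -(2/3) + eps)
  /\ (forall eps : R, 0 < eps ->
      exists (p : point) (u v : tvec),
        inM p /\ lin_indep u v /\ - eps < sec p u v).
Proof.
  split; [exact: sec_bounds | split].
  -
    move=> eps Heps; exists (axis_point eps), (basis i0), (basis i1).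
    split; first exact: Heps.
    split; first exact: lin_indep_basis.
    rewrite sec_horizontal //; have := Khor_near_zero _ Heps; lra.
  -
    move=> eps Heps; set t := 1 + 4 / eps.
    have H4 : 0 < 4 / eps by apply: Rdiv_lt_0_compat; lra.
    have Ht1 : 1 <= t by rewrite /t; lra.
    have Hsmall : 4 / t < eps.
    { apply: div_lt_of_lt_mul; rewrite /t; first by lra.
      have -> : eps * (1 + 4 / eps) = eps + 4 by field; lra.
      lra. }
    exists (axis_point t), (basis i2), (basis i3).
    split; first by rewrite /inM /axis_point /=; lra.
    split; first exact: lin_indep_basis.
    rewrite sec_vertical; last by lra.
    have := Kver_large _ Ht1; lra.
Qed.
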